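(* Consider a particle in the plane with dimensionless canonical observables $x,y,p_x,p_y$ ($[x,p_x]=[y,p_y]=i$, other commutators zero) and the Hamiltonian $H(t)=\tfrac12\big(p_x^2+p_y^2+\beta(t)^2(x^2+y^2)\big)-\beta(t)M_z$, with $M_z=xp_y-yp_x$ and $\beta(t)=\beta_0+\beta_1\sin(2\pi t)$, $\beta_0,\beta_1\in\mathbb R$. Let $b(t)$ be the real $2\times2$ matrix solving $\frac{db}{dt}=\begin{pmatrix}0&1\\-\beta(t)^2&0\end{pmatrix}b(t)$, $b(0)=\mathbb 1$, and let $r(t)$ be the $4\times4$ matrix rotating simultaneously the pairs $(x,y)$ and $(p_x,p_y)$ by the angle $\gamma(t)=\int_0^t\beta(t')dt'$ about the $z$-axis, so that the evolution matrix $u(t)$ defined by $(x(t),y(t),p_x(t),p_y(t))^{T}=u(t)\,(x,y,p_x,p_y)^{T}$ (classical or Heisenberg variables) equals $u(t)=r(t)\,\mathrm{diag}(b(t),b(t))$ in the basis $(x,p_x,y,p_y)$ for each $b$-block. Suppose that for some positive integer $n$ one has $b(n)=\mathbb 1$, and that $\gamma(n)=2\pi k/m$ with $k,m$ positive integers such that $k/m\notin\mathbb Z$. Then $u(mn)=\mathbb 1$ (the full evolution closes into a loop at $t=mn$), and the loop center $\mathbf X=\frac{1}{mn}\int_0^{mn}(x(t),y(t))\,dt$ vanishes identically, both for the classical trajectories and for the quantum Heisenberg observables.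
   Context: Units: time is measured in periods of the field ($T=1$), $\hbar=1$, particle mass $1$; $\beta$ is the dimensionless magnetic field amplitude. The Hamiltonian is quadratic, so classical and quantum (Heisenberg) trajectories are given by the same matrix $u(t)$. *)

(* Units: period T = 1, hbar = 1, mass 1. *)
From Stdlib Require Import Reals Lra.
From Coquelicot Require Import Coquelicot.
Open Scope R_scope.

Definition beta (beta0 beta1 : R) (t : R) : R := beta0 + beta1 * sin (2 * PI * t).

Definition gamma (beta0 beta1 : R) (t : R) : R := RInt (beta beta0 beta1) 0 t.

(* Hamilton's equations for
   H = 1/2 (px^2 + py^2 + beta^2 (x^2+y^2)) - beta (x py - y px):
     x'  =  px + beta y
     y'  =  py - beta x
     px' = -beta^2 x + beta py
     py' = -beta^2 y - beta px                                           *)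
Definition hamilton_traj (beta0 beta1 : R) (X Y PX PY : R -> R) : Prop :=
  forall t : R,
    is_derive X t (PX t + beta beta0 beta1 t * Y t) /\
    is_derive Y t (PY t - beta beta0 beta1 t * X t) /\
    is_derive PX t (- (beta beta0 beta1 t) ^ 2 * X t + beta beta0 beta1 t * PY t) /\
    is_derive PY t (- (beta beta0 beta1 t) ^ 2 * Y t - beta beta0 beta1 t * PX t).

Definition b_solution (beta0 beta1 : R) (b11 b12 b21 b22 : R -> R) : Prop :=
  (forall t : R,
    is_derive b11 t (b21 t) /\
    is_derive b12 t (b22 t) /\
    is_derive b21 t (- (beta beta0 beta1 t) ^ 2 * b11 t) /\
    is_derive b22 t (- (beta beta0 beta1 t) ^ 2 * b12 t)) /\
  b11 0 = 1 /\ b12 0 = 0 /\ b21 0 = 0 /\ b22 0 = 1.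

(** Passing to the frame rotating with angle [gamma] decouples Hamilton's
    equations into two copies of Hill's equation [w'' = - beta^2 w], whose
    fundamental matrix is [b]. Since [beta] is 1-periodic and [b(n) = 1], every
    solution of Hill's equation is [n]-periodic, so over each period the
    trajectory undergoes a rigid rotation by [theta = gamma(n) = 2 pi k/m]. After
    [m] periods the rotation is by [2 pi k], hence [u(mn) = 1], and the integral
    over [[0, mn]] is the integral over one period rotated by the sum of the
    [m]-th roots of unity [exp(i j theta)], which vanishes because
    [theta/2 = pi k/m] is not a multiple of [pi]. *)

From Stdlib Require Import Reals ZArith Lra Lia.
From Coquelicot Require Import Coquelicot.
Open Scope R_scope.

(** * Derivatives of real functions *)

Lemma is_derive_eq (f : R -> R) (x l l' : R) :
  is_derive f x l -> l = l' -> is_derive f x l'.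
Proof. now intros H <-. Qed.

Lemma is_derive_Rplus (f g : R -> R) (x a b : R) :
  is_derive f x a -> is_derive g x b -> is_derive (fun t => f t + g t) x (a + b).
Proof. exact (is_derive_plus f g x a b). Qed.

Lemma is_derive_Rminus (f g : R -> R) (x a b : R) :
  is_derive f x a -> is_derive g x b -> is_derive (fun t => f t - g t) x (a - b).
Proof. exact (is_derive_minus f g x a b). Qed.

Lemma is_derive_Rmult_const (f : R -> R) (c x a : R) :
  is_derive f x a -> is_derive (fun t => c * f t) x (c * a).
Proof. exact (is_derive_scal f x c a). Qed.

Lemma is_derive_cos_comp (g : R -> R) (x a : R) :
  is_derive g x a -> is_derive (fun t => cos (g t)) x (- sin (g x) * a).
Proof.
  intros H. eapply is_derive_eq.
  - exact (is_derive_comp cos g x _ a (is_derive_cos (g x)) H).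
  - unfold scal; simpl; unfold mult; simpl. ring.
Qed.

Lemma is_derive_sin_comp (g : R -> R) (x a : R) :
  is_derive g x a -> is_derive (fun t => sin (g t)) x (cos (g x) * a).
Proof.
  intros H. eapply is_derive_eq.
  - exact (is_derive_comp sin g x _ a (is_derive_sin (g x)) H).
  - unfold scal; simpl; unfold mult; simpl. ring.
Qed.

Lemma is_derive_translate (f : R -> R) (s x a : R) :
  is_derive f (x + s) a -> is_derive (fun t => f (t + s)) x a.
Proof.
  intros H.
  assert (Hs : is_derive (fun t => t + s) x 1) by (auto_derive; auto).
  eapply is_derive_eq.
  - exact (is_derive_comp f (fun t => t + s) x a 1 H Hs).
  - unfold scal; simpl; unfold mult; simpl. ring.
Qed.

Lemma is_derive_sq (f : R -> R) (x a : R) :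
  is_derive f x a -> is_derive (fun t => f t ^ 2) x (2 * f x * a).
Proof.
  intros H. eapply is_derive_eq.
  - exact (is_derive_pow f 2 x a H).
  - simpl. ring.
Qed.

Lemma is_derive_rotate_fst (g u v : R -> R) (t dg du dv : R) :
  is_derive g t dg -> is_derive u t du -> is_derive v t dv ->
  is_derive (fun s => cos (g s) * u s - sin (g s) * v s) t
    (cos (g t) * (du - dg * v t) - sin (g t) * (dv + dg * u t)).
Proof.
  intros Hg Hu Hv. eapply is_derive_eq.
  - apply is_derive_Rminus.
    + exact (Derive.is_derive_mult _ u t _ _ (is_derive_cos_comp g t dg Hg) Hu).
    + exact (Derive.is_derive_mult _ v t _ _ (is_derive_sin_comp g t dg Hg) Hv).
  - cbv beta. ring.
Qed.

Lemma is_derive_rotate_snd (g u v : R -> R) (t dg du dv : R) :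
  is_derive g t dg -> is_derive u t du -> is_derive v t dv ->
  is_derive (fun s => sin (g s) * u s + cos (g s) * v s) t
    (sin (g t) * (du - dg * v t) + cos (g t) * (dv + dg * u t)).
Proof.
  intros Hg Hu Hv. eapply is_derive_eq.
  - apply is_derive_Rplus.
    + exact (Derive.is_derive_mult _ u t _ _ (is_derive_sin_comp g t dg Hg) Hu).
    + exact (Derive.is_derive_mult _ v t _ _ (is_derive_cos_comp g t dg Hg) Hv).
  - cbv beta. ring.
Qed.

(** * Integrals *)

Lemma RInt_translate (f : R -> R) (a b s : R) :
  ex_RInt f (a + s) (b + s) ->
  RInt f (a + s) (b + s) = RInt (fun y => f (y + s)) a b.
Proof.
  intros Hf.
  replace (a + s) with (1 * a + s) in * by ring.
  replace (b + s) with (1 * b + s) in * by ring.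
  rewrite <- (RInt_comp_lin f 1 s a b Hf).
  apply RInt_ext. intros y _. unfold scal; simpl; unfold mult; simpl.
  now rewrite !Rmult_1_l.
Qed.

Lemma RInt_lin_comb (f g : R -> R) (a b c d : R) :
  ex_RInt f a b -> ex_RInt g a b ->
  RInt (fun y => c * f y + d * g y) a b = c * RInt f a b + d * RInt g a b.
Proof.
  intros Hf Hg. apply (is_RInt_unique (V := R_CompleteNormedModule)).
  apply (is_RInt_plus (V := R_NormedModule) (fun y => c * f y) (fun y => d * g y));
    apply (is_RInt_scal (V := R_NormedModule) _ a b);
    now apply (RInt_correct (V := R_CompleteNormedModule)).
Qed.

Lemma RInt_periodic_add (f : R -> R) (T : R) :
  (forall a b, ex_RInt f a b) -> (forall t, f (t + T) = f t) ->
  forall t, RInt f 0 (t + T) = RInt f 0 t + RInt f 0 T.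
Proof.
  intros Hf Hper t.
  rewrite <- (RInt_Chasles f 0 T (t + T)) by apply Hf.
  change (plus ?a ?b) with (a + b). rewrite Rplus_comm. f_equal.
  rewrite <- (Rplus_0_l T) at 1. rewrite RInt_translate by apply Hf.
  apply RInt_ext. intros y _. apply Hper.
Qed.

Lemma ex_RInt_of_derive (f df : R -> R) :
  (forall t, is_derive f t (df t)) -> forall a b, ex_RInt f a b.
Proof.
  intros Hf a b. apply (ex_RInt_continuous (V := R_CompleteNormedModule)). intros z _.
  apply (ex_derive_continuous (K := R_AbsRing) (V := R_NormedModule)).
  exists (df z). apply Hf.
Qed.

(** * Hill's equation *)

Definition hill_solution (c w q : R -> R) : Prop :=
  forall t, is_derive w t (q t) /\ is_derive q t (- c t * w t).

Lemma gronwall_zero (E dE : R -> R) (K : R) :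
  (forall t, is_derive E t (dE t)) -> (forall t, 0 <= E t) ->
  (forall t, dE t <= K * E t) -> E 0 = 0 ->
  forall t, 0 <= t -> E t = 0.
Proof.
  intros HE Hpos Hgrowth HE0 t Ht.
  set (G := fun s => E s * exp (- (K * s))).
  assert (HG : forall s, is_derive G s ((dE s - K * E s) * exp (- (K * s)))).
  { intros s. eapply is_derive_eq.
    - apply (Derive.is_derive_mult E (fun s => exp (- (K * s))) s (dE s)
               (- K * exp (- (K * s)))).
      + apply HE.
      + auto_derive; [auto | ring].
    - ring. }
  destruct (MVT_cor4 G _ 0 (Rabs t) (fun c _ => HG c) t) as [c [Hc _]].
  { rewrite Rminus_0_r. apply Rle_refl. }
  assert (Hdec : (dE c - K * E c) * exp (- (K * c)) <= 0).
  { assert (Hexp := exp_pos (- (K * c))). specialize (Hgrowth c). nra. }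
  assert (HGt : E t * exp (- (K * t)) <= 0).
  { unfold G in Hc. rewrite HE0, Rmult_0_l, Rminus_0_r, Rminus_0_r in Hc.
    rewrite Hc. nra. }
  assert (Hexp := exp_pos (- (K * t))).
  apply Rle_antisym; [nra | apply Hpos].
Qed.

Lemma two_mul_le_abs_sq (u a b : R) : 2 * u * a * b <= Rabs u * (a ^ 2 + b ^ 2).
Proof.
  destruct (Rle_or_lt 0 u) as [Hu | Hu].
  - rewrite Rabs_pos_eq by exact Hu.
    assert (0 <= u * (a - b) ^ 2) by (apply Rmult_le_pos; [exact Hu | apply pow2_ge_0]). nra.
  - rewrite Rabs_left by exact Hu.
    assert (0 <= - u * (a + b) ^ 2) by (apply Rmult_le_pos; [lra | apply pow2_ge_0]). nra.
Qed.

Section Hill.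

Variables (c : R -> R) (C : R).
Hypothesis c_bounded : forall t, Rabs (c t) <= C.

Lemma hill_solution_unique (w1 q1 w2 q2 : R -> R) :
  hill_solution c w1 q1 -> hill_solution c w2 q2 ->
  w1 0 = w2 0 -> q1 0 = q2 0 ->
  forall t, 0 <= t -> w1 t = w2 t /\ q1 t = q2 t.
Proof.
  intros H1 H2 Hw0 Hq0 t Ht.
  set (d := fun s => w1 s - w2 s). set (e := fun s => q1 s - q2 s).
  assert (Henergy : forall s, is_derive (fun s => d s ^ 2 + e s ^ 2) s
                                (2 * (1 - c s) * d s * e s)).
  { intros s. destruct (H1 s) as [Dw1 Dq1]. destruct (H2 s) as [Dw2 Dq2].
    eapply is_derive_eq.
    - apply is_derive_Rplus; apply is_derive_sq; apply is_derive_Rminus; eassumption.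
    - unfold d, e. ring. }
  assert (Hgrowth : forall s, 2 * (1 - c s) * d s * e s <= (1 + C) * (d s ^ 2 + e s ^ 2)).
  { intros s. eapply Rle_trans; [apply two_mul_le_abs_sq |].
    apply Rmult_le_compat_r; [nra |].
    eapply Rle_trans; [apply Rabs_triang |].
    rewrite Rabs_R1, Rabs_Ropp. specialize (c_bounded s). lra. }
  assert (Hzero := gronwall_zero _ _ (1 + C) Henergy (fun s => ltac:(nra)) Hgrowth
                     ltac:(unfold d, e; rewrite Hw0, Hq0; ring) t Ht).
  unfold d, e in Hzero.
  assert (Hd := pow2_ge_0 (w1 t - w2 t)). assert (He := pow2_ge_0 (q1 t - q2 t)).
  split; apply Rminus_diag_uniq, Rsqr_0_uniq; unfold Rsqr; lra.
Qed.

Lemma hill_solution_lin_comb (w1 q1 w2 q2 : R -> R) (a b : R) :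
  hill_solution c w1 q1 -> hill_solution c w2 q2 ->
  hill_solution c (fun t => a * w1 t + b * w2 t) (fun t => a * q1 t + b * q2 t).
Proof.
  intros H1 H2 t. destruct (H1 t) as [Dw1 Dq1]. destruct (H2 t) as [Dw2 Dq2]. split.
  - apply is_derive_Rplus; now apply is_derive_Rmult_const.
  - eapply is_derive_eq.
    + apply is_derive_Rplus; apply is_derive_Rmult_const; eassumption.
    + ring.
Qed.

Lemma hill_solution_fundamental (b11 b12 b21 b22 w q : R -> R) :
  hill_solution c b11 b21 -> hill_solution c b12 b22 ->
  b11 0 = 1 -> b12 0 = 0 -> b21 0 = 0 -> b22 0 = 1 ->
  hill_solution c w q ->
  forall t, 0 <= t -> w t = w 0 * b11 t + q 0 * b12 t /\ q t = w 0 * b21 t + q 0 * b22 t.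
Proof.
  intros Hb1 Hb2 H11 H12 H21 H22 Hw.
  apply hill_solution_unique.
  - exact Hw.
  - now apply hill_solution_lin_comb.
  - rewrite H11, H12. ring.
  - rewrite H21, H22. ring.
Qed.

Variable T : R.
Hypothesis c_periodic : forall t, c (t + T) = c t.

Lemma hill_solution_translate (w q : R -> R) :
  hill_solution c w q -> hill_solution c (fun t => w (t + T)) (fun t => q (t + T)).
Proof.
  intros Hw t. destruct (Hw (t + T)) as [Dw Dq]. rewrite c_periodic in Dq.
  split; now apply is_derive_translate.
Qed.

Hypothesis T_ge0 : 0 <= T.

Lemma hill_solution_periodic (w q : R -> R) :
  hill_solution c w q -> w T = w 0 -> q T = q 0 ->
  forall j t, 0 <= t -> w (t + INR j * T) = w t /\ q (t + INR j * T) = q t.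
Proof.
  intros Hw HwT HqT.
  assert (Hper : forall t, 0 <= t -> w (t + T) = w t /\ q (t + T) = q t).
  { apply hill_solution_unique.
    - now apply hill_solution_translate.
    - exact Hw.
    - now rewrite Rplus_0_l.
    - now rewrite Rplus_0_l. }
  induction j as [| j IH]; intros t Ht.
  - simpl. rewrite Rmult_0_l, Rplus_0_r. now split.
  - replace (t + INR (S j) * T) with (t + INR j * T + T) by (rewrite S_INR; ring).
    assert (Hj : 0 <= INR j * T) by (apply Rmult_le_pos; [apply pos_INR | exact T_ge0]).
    destruct (Hper (t + INR j * T) ltac:(lra)) as [-> ->].
    now apply IH.
Qed.

End Hill.

(** * Rotations and sums of roots of unity *)

Lemma rotation_cancel (phi th u v u' v' : R) :
  cos (phi + th) * u' - sin (phi + th) * v' = cos phi * u - sin phi * v ->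
  sin (phi + th) * u' + cos (phi + th) * v' = sin phi * u + cos phi * v ->
  u' = cos th * u + sin th * v /\ v' = - sin th * u + cos th * v.
Proof.
  intros Hx Hy.
  assert (Hpt := sin2_cos2 (phi + th)). assert (Hp := sin2_cos2 phi).
  unfold Rsqr in Hpt, Hp.
  assert (Hu' : u' = cos (phi + th) * (cos phi * u - sin phi * v)
                     + sin (phi + th) * (sin phi * u + cos phi * v)).
  { rewrite <- Hx, <- Hy.
    transitivity (u' * (sin (phi + th) * sin (phi + th) + cos (phi + th) * cos (phi + th)));
      [rewrite Hpt | ]; ring. }
  assert (Hv' : v' = - sin (phi + th) * (cos phi * u - sin phi * v)
                     + cos (phi + th) * (sin phi * u + cos phi * v)).
  { rewrite <- Hx, <- Hy.
    transitivity (v' * (sin (phi + th) * sin (phi + th) + cos (phi + th) * cos (phi + th)));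
      [rewrite Hpt | ]; ring. }
  rewrite cos_plus, sin_plus in Hu', Hv'. rewrite Hu', Hv'. split.
  - transitivity ((cos th * u + sin th * v) * (sin phi * sin phi + cos phi * cos phi));
      [ | rewrite Hp]; ring.
  - transitivity ((- sin th * u + cos th * v) * (sin phi * sin phi + cos phi * cos phi));
      [ | rewrite Hp]; ring.
Qed.

Fixpoint cos_sum (th : R) (j : nat) : R :=
  match j with O => 0 | S j' => cos_sum th j' + cos (INR j' * th) end.

Fixpoint sin_sum (th : R) (j : nat) : R :=
  match j with O => 0 | S j' => sin_sum th j' + sin (INR j' * th) end.

Lemma cos_sum_telescope (al : R) (j : nat) :
  2 * sin al * cos_sum (2 * al) j = sin (INR j * (2 * al) - al) + sin al.
Proof.
  induction j as [| j IH]; simpl cos_sum.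
  - rewrite Rmult_0_l, Rminus_0_l, sin_neg. ring.
  - rewrite Rmult_plus_distr_l, IH, S_INR.
    replace ((INR j + 1) * (2 * al) - al) with (INR j * (2 * al) + al) by ring.
    rewrite sin_plus, sin_minus. ring.
Qed.

Lemma sin_sum_telescope (al : R) (j : nat) :
  2 * sin al * sin_sum (2 * al) j = cos al - cos (INR j * (2 * al) - al).
Proof.
  induction j as [| j IH]; simpl sin_sum.
  - rewrite Rmult_0_l, Rminus_0_l, cos_neg. ring.
  - rewrite Rmult_plus_distr_l, IH, S_INR.
    replace ((INR j + 1) * (2 * al) - al) with (INR j * (2 * al) + al) by ring.
    rewrite cos_plus, cos_minus. ring.
Qed.

Lemma cos_sin_sum_eq0 (al : R) (m : nat) :
  sin al <> 0 -> cos (INR m * (2 * al)) = 1 -> sin (INR m * (2 * al)) = 0 ->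
  cos_sum (2 * al) m = 0 /\ sin_sum (2 * al) m = 0.
Proof.
  intros Hal Hcos Hsin.
  assert (Hc := cos_sum_telescope al m). assert (Hs := sin_sum_telescope al m).
  rewrite sin_minus, Hcos, Hsin in Hc. rewrite cos_minus, Hcos, Hsin in Hs.
  split; apply (Rmult_eq_reg_l (2 * sin al)); lra.
Qed.

Lemma sin_PI_mult_neq0 (x : R) : (forall z : Z, x <> IZR z) -> sin (PI * x) <> 0.
Proof.
  intros Hx Hsin. destruct (sin_eq_0_0 _ Hsin) as [z Hz]. apply (Hx z).
  apply (Rmult_eq_reg_l PI); [| apply PI_neq0]. lra.
Qed.

Lemma RInt_rotating_periods (f g : R -> R) (T th : R) :
  0 <= T -> (forall a b, ex_RInt f a b) -> (forall a b, ex_RInt g a b) ->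
  (forall j t, 0 <= t ->
     f (t + INR j * T) = cos (INR j * th) * f t + sin (INR j * th) * g t /\
     g (t + INR j * T) = - sin (INR j * th) * f t + cos (INR j * th) * g t) ->
  forall j,
    RInt f 0 (INR j * T) = cos_sum th j * RInt f 0 T + sin_sum th j * RInt g 0 T /\
    RInt g 0 (INR j * T) = cos_sum th j * RInt g 0 T - sin_sum th j * RInt f 0 T.
Proof.
  intros HT Hf Hg Hrot j. induction j as [| j [IHf IHg]].
  - simpl. rewrite Rmult_0_l, !RInt_point. unfold zero; simpl. split; ring.
  - set (s := INR j * T).
    assert (Hperiod : forall h : R -> R, (forall a b, ex_RInt h a b) ->
              RInt h 0 (INR (S j) * T) = RInt h 0 s + RInt (fun y => h (y + s)) 0 T).
    { intros h Hh. rewrite <- (RInt_Chasles h 0 s) by apply Hh.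
      change (plus ?a ?b) with (a + b). f_equal.
      rewrite <- RInt_translate by apply Hh. f_equal; unfold s; rewrite ?S_INR; ring. }
    assert (Hon : forall y, Rmin 0 T < y < Rmax 0 T -> 0 <= y).
    { intros y. rewrite Rmin_left by exact HT. lra. }
    rewrite !Hperiod by assumption.
    rewrite (RInt_ext (fun y => f (y + s)) (fun y => cos (INR j * th) * f y + sin (INR j * th) * g y))
      by (intros y Hy; apply Hrot, Hon, Hy).
    rewrite (RInt_ext (fun y => g (y + s)) (fun y => - sin (INR j * th) * f y + cos (INR j * th) * g y))
      by (intros y Hy; apply Hrot, Hon, Hy).
    rewrite !RInt_lin_comb by auto. unfold s. rewrite IHf, IHg. simpl. split; ring.
Qed.

(** * The rotating frame *)

Lemma beta_periodic (beta0 beta1 : R) (n : nat) (t : R) :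
  beta beta0 beta1 (t + INR n) = beta beta0 beta1 t.
Proof.
  unfold beta. replace (2 * PI * (t + INR n)) with (2 * PI * t + 2 * INR n * PI) by ring.
  now rewrite sin_period.
Qed.

Definition beta_sq (beta0 beta1 t : R) : R := beta beta0 beta1 t ^ 2.

Lemma beta_sq_bounded (beta0 beta1 t : R) :
  Rabs (beta_sq beta0 beta1 t) <= (Rabs beta0 + Rabs beta1) ^ 2.
Proof.
  unfold beta_sq, beta. rewrite <- RPow_abs.
  assert (Hsin : Rabs (sin (2 * PI * t)) <= 1) by (apply Rabs_le, SIN_bound).
  assert (Hb : Rabs (beta0 + beta1 * sin (2 * PI * t)) <= Rabs beta0 + Rabs beta1).
  { eapply Rle_trans; [apply Rabs_triang |]. rewrite Rabs_mult.
    assert (0 <= Rabs beta1) by apply Rabs_pos. nra. }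
  apply pow_incr. split; [apply Rabs_pos | exact Hb].
Qed.

Lemma ex_RInt_beta (beta0 beta1 a b : R) : ex_RInt (beta beta0 beta1) a b.
Proof.
  apply (ex_RInt_of_derive _ (fun t => beta1 * (cos (2 * PI * t) * (2 * PI)))).
  intros t. unfold beta. auto_derive; [auto | ring].
Qed.

Lemma gamma_derive (beta0 beta1 t : R) :
  is_derive (gamma beta0 beta1) t (beta beta0 beta1 t).
Proof.
  apply (is_derive_RInt (V := R_NormedModule) _ _ 0).
  - apply filter_forall. intros x.
    apply (RInt_correct (V := R_CompleteNormedModule)), ex_RInt_beta.
  - apply (ex_derive_continuous (K := R_AbsRing) (V := R_NormedModule)).
    unfold beta. auto_derive. auto.
Qed.

Lemma gamma_add_periods (beta0 beta1 : R) (n j : nat) (t : R) :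
  gamma beta0 beta1 (t + INR j * INR n) =
  gamma beta0 beta1 t + INR j * gamma beta0 beta1 (INR n).
Proof.
  induction j as [| j IH].
  - simpl. rewrite !Rmult_0_l, !Rplus_0_r. reflexivity.
  - replace (t + INR (S j) * INR n) with (t + INR j * INR n + INR n) by (rewrite S_INR; ring).
    unfold gamma in *. rewrite RInt_periodic_add.
    + rewrite IH, S_INR. ring.
    + apply ex_RInt_beta.
    + apply beta_periodic.
Qed.

Section Rotating_frame.

Variables (beta0 beta1 : R) (X Y PX PY : R -> R).
Hypothesis traj : hamilton_traj beta0 beta1 X Y PX PY.

Lemma hamilton_rotated_hill :
  hill_solution (beta_sq beta0 beta1)
    (fun t => cos (gamma beta0 beta1 t) * X t - sin (gamma beta0 beta1 t) * Y t)
    (fun t => cos (gamma beta0 beta1 t) * PX t - sin (gamma beta0 beta1 t) * PY t) /\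
  hill_solution (beta_sq beta0 beta1)
    (fun t => sin (gamma beta0 beta1 t) * X t + cos (gamma beta0 beta1 t) * Y t)
    (fun t => sin (gamma beta0 beta1 t) * PX t + cos (gamma beta0 beta1 t) * PY t).
Proof.
  assert (Hangle := gamma_derive beta0 beta1).
  split; intros t; destruct (traj t) as [DX [DY [DPX DPY]]];
    unfold beta_sq; split.
  - eapply is_derive_eq.
    + apply is_derive_rotate_fst; [apply Hangle | exact DX | exact DY].
    + ring.
  - eapply is_derive_eq.
    + apply is_derive_rotate_fst; [apply Hangle | exact DPX | exact DPY].
    + ring.
  - eapply is_derive_eq.
    + apply is_derive_rotate_snd; [apply Hangle | exact DX | exact DY].
    + ring.
  - eapply is_derive_eq.
    + apply is_derive_rotate_snd; [apply Hangle | exact DPX | exact DPY].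
    + ring.
Qed.

Lemma ex_RInt_traj (a b : R) : ex_RInt X a b /\ ex_RInt Y a b.
Proof.
  split.
  - apply (ex_RInt_of_derive X (fun t => PX t + beta beta0 beta1 t * Y t)).
    intros t. exact (proj1 (traj t)).
  - apply (ex_RInt_of_derive Y (fun t => PY t - beta beta0 beta1 t * X t)).
    intros t. exact (proj1 (proj2 (traj t))).
Qed.

Variables (n : nat) (b11 b12 b21 b22 : R -> R).
Hypothesis b_sol : b_solution beta0 beta1 b11 b12 b21 b22.
Hypothesis b_monodromy :
  b11 (INR n) = 1 /\ b12 (INR n) = 0 /\ b21 (INR n) = 0 /\ b22 (INR n) = 1.

Lemma hill_solution_beta_periodic (w q : R -> R) :
  hill_solution (beta_sq beta0 beta1) w q ->
  forall j t, 0 <= t -> w (t + INR j * INR n) = w t /\ q (t + INR j * INR n) = q t.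
Proof.
  intros Hw.
  destruct b_sol as [Hb [H11 [H12 [H21 H22]]]].
  destruct b_monodromy as [M11 [M12 [M21 M22]]].
  assert (Hb1 : hill_solution (beta_sq beta0 beta1) b11 b21) by (intros t; split; apply Hb).
  assert (Hb2 : hill_solution (beta_sq beta0 beta1) b12 b22) by (intros t; split; apply Hb).
  destruct (hill_solution_fundamental (beta_sq beta0 beta1) _ (beta_sq_bounded beta0 beta1)
              _ _ _ _ _ _ Hb1 Hb2 H11 H12 H21 H22 Hw (INR n) (pos_INR n))
    as [Hwn Hqn].
  rewrite M11, M12 in Hwn. rewrite M21, M22 in Hqn.
  apply (hill_solution_periodic (beta_sq beta0 beta1) _ (beta_sq_bounded beta0 beta1)).
  - intros t. unfold beta_sq. now rewrite beta_periodic.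
  - apply pos_INR.
  - exact Hw.
  - rewrite Hwn. ring.
  - rewrite Hqn. ring.
Qed.

Lemma hamilton_traj_periods (th : R) :
  gamma beta0 beta1 (INR n) = th ->
  forall j t, 0 <= t ->
  (X (t + INR j * INR n) = cos (INR j * th) * X t + sin (INR j * th) * Y t /\
   Y (t + INR j * INR n) = - sin (INR j * th) * X t + cos (INR j * th) * Y t) /\
  (PX (t + INR j * INR n) = cos (INR j * th) * PX t + sin (INR j * th) * PY t /\
   PY (t + INR j * INR n) = - sin (INR j * th) * PX t + cos (INR j * th) * PY t).
Proof.
  intros Hth j t Ht.
  destruct hamilton_rotated_hill as [Hx Hy].
  destruct (hill_solution_beta_periodic _ _ Hx j t Ht) as [Ex Epx].
  destruct (hill_solution_beta_periodic _ _ Hy j t Ht) as [Ey Epy].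
  rewrite gamma_add_periods, Hth in Ex, Ey, Epx, Epy.
  split; now apply (rotation_cancel (gamma beta0 beta1 t)).
Qed.

End Rotating_frame.

Theorem proposition2 (beta0 beta1 : R) (n k m : nat)
  (b11 b12 b21 b22 : R -> R) :
  (0 < n)%nat -> (0 < k)%nat -> (0 < m)%nat ->
  b_solution beta0 beta1 b11 b12 b21 b22 ->
  b11 (INR n) = 1 -> b12 (INR n) = 0 -> b21 (INR n) = 0 -> b22 (INR n) = 1 ->
  gamma beta0 beta1 (INR n) = 2 * PI * INR k / INR m ->
  (forall z : Z, INR k / INR m <> IZR z) ->
  forall X Y PX PY : R -> R,
    hamilton_traj beta0 beta1 X Y PX PY ->
    (X (INR (m * n)) = X 0 /\ Y (INR (m * n)) = Y 0 /\
     PX (INR (m * n)) = PX 0 /\ PY (INR (m * n)) = PY 0) /\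
    (/ INR (m * n) * RInt X 0 (INR (m * n)) = 0 /\
     / INR (m * n) * RInt Y 0 (INR (m * n)) = 0).
Proof.
  intros _ _ Hm Hb h11 h12 h21 h22 Hgamma Hratio X Y PX PY Htraj.
  set (al := PI * (INR k / INR m)).
  assert (Hm0 : INR m <> 0) by (apply not_0_INR; lia).
  assert (Hth : gamma beta0 beta1 (INR n) = 2 * al)
    by (rewrite Hgamma; unfold al; field; exact Hm0).
  assert (Hturns : INR m * (2 * al) = 0 + 2 * INR k * PI) by (unfold al; field; exact Hm0).
  assert (Hcos : cos (INR m * (2 * al)) = 1) by (rewrite Hturns, cos_period; apply cos_0).
  assert (Hsin : sin (INR m * (2 * al)) = 0) by (rewrite Hturns, sin_period; apply sin_0).
  assert (Hperiods := hamilton_traj_periods _ _ _ _ _ _ Htraj n _ _ _ _ Hb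
                        (conj h11 (conj h12 (conj h21 h22))) _ Hth).
  rewrite mult_INR. split.
  - destruct (Hperiods m 0 (Rle_refl 0)) as [[Ex Ey] [Epx Epy]].
    rewrite Hcos, Hsin, Rplus_0_l in *.
    rewrite Ex, Ey, Epx, Epy. repeat split; ring.
  - destruct (cos_sin_sum_eq0 al m (sin_PI_mult_neq0 _ Hratio) Hcos Hsin) as [Csum Ssum].
    destruct (RInt_rotating_periods X Y (INR n) (2 * al) (pos_INR n)
                (fun a b => proj1 (ex_RInt_traj _ _ _ _ _ _ Htraj a b))
                (fun a b => proj2 (ex_RInt_traj _ _ _ _ _ _ Htraj a b))
                (fun j t Ht => proj1 (Hperiods j t Ht)) m)
      as [Ix Iy].
    rewrite Ix, Iy, Csum, Ssum. split; ring.
Qed.
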